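(* Under the assumptions of the preceding setting (channel $y=hx+v$, $v\sim\mathcal{CN}(0,1)$, perfect CSI at transmitter and receiver, $|h|^2$ with continuous density $f$, finite mean, and strictly increasing CDF $F$ on its support; fixed $A>1$), consider the On-Off power allocation $$P(h)=\begin{cases}A\,\mathrm{SNR}, & |h|^2\ge F^{-1}(1-\frac1A),\\ 0,&\text{otherwise},\end{cases}$$ which satisfies $\mathbf{E}[P(h)]\le\mathrm{SNR}$ and $P(h)\le A\,\mathrm{SNR}$. Its rate $$R(\mathrm{SNR})=\int_{F^{-1}(1-\frac1A)}^\infty \log(1+A\,\mathrm{SNR}\,t)\,f(t)\,dt$$ satisfies $\lim_{\mathrm{SNR}\to0}R(\mathrm{SNR})/C(\mathrm{SNR})=1$, where $C(\mathrm{SNR})$ is the capacity under average power constraint $\mathrm{SNR}$ and peak power constraint $A\,\mathrm{SNR}$.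
   Context: $C(\mathrm{SNR})=\sup\mathbf{E}[\log(1+P(h)|h|^2)]$ over measurable $P(h)\ge 0$ with $\mathbf{E}[P(h)]\le\mathrm{SNR}$ and $\max_hP(h)\le A\,\mathrm{SNR}$. Logarithms are natural. *)

From HB Require Import structures.
From mathcomp Require Import all_boot all_order all_algebra.
From mathcomp Require Import all_classical all_reals all_analysis.
Set Implicit Arguments. Unset Strict Implicit. Unset Printing Implicit Defensive.
Import Order.TTheory GRing.Theory Num.Theory.
Import numFieldNormedType.Exports.
Local Open Scope classical_set_scope.
Local Open Scope ring_scope.

Section Defs.
Variable R : realType.
Local Notation mu := (@lebesgue_measure R).

(* expectation of phi(|h|^2) when |h|^2 has density f (w.r.t. Lebesgue) *)
Definition expect (f phi : R -> R) : \bar R :=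
  (\int[mu]_(t in setT) (phi t * f t)%:E)%E.

Definition cdf (f : R -> R) (x : R) : R :=
  fine (\int[mu]_(t in `]-oo, x]) (f t)%:E)%E.

(* F^{-1}(p) (generalized inverse; the true inverse when F is strictly increasing) *)
Definition cdf_inv (f : R -> R) (p : R) : R := inf [set x | p <= cdf f x].

Definition in_support (f : R -> R) (x : R) : Prop :=
  forall e : R, 0 < e -> cdf f (x - e) < cdf f (x + e).

Definition gain_density (f : R -> R) : Prop :=
  [/\ measurable_fun setT f,
      (forall t, 0 <= f t),
      (forall t, t < 0 -> f t = 0),
      (\int[mu]_(t in setT) (f t)%:E = 1)%E &
      {within `[0, +oo[, continuous f}] /\
  ((\int[mu]_(t in setT) (t * f t)%:E < +oo)%E /\
   (forall x y, x < y -> in_support f x -> in_support f y ->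
                cdf f x < cdf f y)).

(* ergodic rate E[log(1 + P(h)|h|^2)] of a power allocation P (function of |h|^2) *)
Definition rate (f P : R -> R) : \bar R := expect f (fun t => ln (1 + P t * t)).

Definition admissible (f : R -> R) (A snr : R) (P : R -> R) : Prop :=
  [/\ measurable_fun setT P, (forall t, 0 <= P t),
      (expect f P <= snr%:E)%E & (forall t, P t <= A * snr)].

Definition capacity (f : R -> R) (A snr : R) : \bar R :=
  ereal_sup [set rate f P | P in admissible f A snr].

Definition onoff (f : R -> R) (A snr : R) (t : R) : R :=
  if cdf_inv f (1 - A^-1) <= t then A * snr else 0.

End Defs.

From Pilot Require Import Defs.
From HB Require Import structures.
From mathcomp Require Import all_boot all_order all_algebra.
From mathcomp Require Import all_classical all_reals all_analysis.
From mathcomp Require Import measurable_realfun ring lra.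
Import Order.TTheory GRing.Theory Num.Theory.
Import numFieldNormedType.Exports.
Local Open Scope classical_set_scope.
Local Open Scope ring_scope.

(* Since [ln (1 + x) <= x], every rate is bounded by the linear functional
   [E[P(h) |h|^2]].  An exchange argument shows that the On-Off allocation
   maximises this functional among admissible allocations, so
   [C(SNR) <= SNR * M] with [M = A E[|h|^2; |h|^2 >= F^-1(1 - 1/A)]].
   Conversely [ln (1 + x) >= x - x^2], and on the range [|h|^2 <= N] the
   correction is [O(SNR)], so [R(SNR) >= SNR (M - e)] for small [SNR],
   by monotone convergence of the truncated moments to [M].  Hence
   [SNR (M - e) <= R <= C <= SNR M], and [R / C -> 1]. *)

Lemma ge0_integralDZr d (T : measurableType d) (R : realType) (mu : measure T R)
    (g h : T -> R) (b : R) :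
  measurable_fun setT g -> measurable_fun setT h ->
  (forall t, 0 <= g t) -> (forall t, 0 <= h t) -> 0 <= b ->
  (\int[mu]_(t in setT) (g t + b * h t)%:E =
   \int[mu]_(t in setT) (g t)%:E + b%:E * \int[mu]_(t in setT) (h t)%:E)%E.
Proof.
move=> mg mh g0 h0 b0.
under eq_integral do rewrite EFinD EFinM.
rewrite ge0_integralD //; last 4 first.
- by move=> t _; rewrite lee_fin.
- exact/measurable_EFinP.
- by move=> t _; rewrite lee_fin mulr_ge0.
- exact/measurable_EFinP/measurable_funM.
by rewrite ge0_integralZl_EFin // => [t _|]; [rewrite lee_fin | exact/measurable_EFinP].
Qed.

Lemma ln1Dx_ge (R : realType) (x : R) : 0 <= x -> x - x ^+ 2 <= ln (1 + x).
Proof.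
move=> x0; have x1 : 0 < 1 + x by lra.
set u := (1 + x)^-1; have u0 : 0 < u by rewrite invr_gt0.
have ux : u * (1 + x) = 1 by rewrite mulVf // lt0r_neq0.
have ln_u : ln u <= u - 1.
  by have := @le_ln1Dx R (u - 1); rewrite addrCA subrr addr0; apply; lra.
have : x - x ^+ 2 <= 1 - u by rewrite expr2; nra.
by rewrite -[1 + x]invrK lnV ?posrE //; lra.
Qed.

Lemma ratio_cvg1 (R : realType) (r c : R -> R) (M : R) : 0 < M ->
  (\forall s \near 0^'+, r s <= c s <= s * M) ->
  (forall e, 0 < e -> \forall s \near 0^'+, s * (M - e) <= r s) ->
  r s / c s @[s --> 0^'+] --> (1 : R).
Proof.
move=> M0 rcM lower; apply/cvgrPdist_le => e e0.
have e1 : 0 < 1 + e by lra.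
(* with [eps := M e / (1 + e)], the lower bound reads [r >= s M / (1 + e)] *)
set eps := M * (e / (1 + e)).
have eps0 : 0 < eps by rewrite mulr_gt0 // divr_gt0.
have epsE : eps * (1 + e) = M * e by rewrite /eps -mulrA divfK // lt0r_neq0.
near=> s.
have s0 : 0 < s by near: s; exact: nbhs_right_gt.
have /andP[rc cM] : r s <= c s <= s * M by near: s.
have rl : s * (M - eps) <= r s by near: s; exact: lower.
have eps_lt : eps < M by rewrite /eps gtr_pMr // ltr_pdivrMr // mul1r; lra.
have c0 : 0 < c s.
  by apply: lt_le_trans rc; apply: lt_le_trans rl; rewrite mulr_gt0 // subr_gt0.
rewrite ger0_norm ?subr_ge0 ?ler_pdivrMr ?mul1r //.
have qc : r s / c s * c s = r s by rewrite mulfVK // lt0r_neq0.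
have : s * eps * (1 + e) = e * (s * M) by rewrite -mulrA epsE; ring.
have : s * (M - eps) * e <= r s * e by rewrite ler_wpM2r // ltW.
nra.
Unshelve. all: by end_near.
Qed.

Section Density.
Variables (R : realType) (f : R -> R).
Hypothesis Hf : gain_density f.
Local Notation mu := (@lebesgue_measure R).

Let mf : measurable_fun setT f. Proof. by case: Hf => -[]. Qed.
Let f_ge0 t : 0 <= f t. Proof. by case: Hf => -[]. Qed.
Let f_neg t : t < 0 -> f t = 0. Proof. by case: Hf => -[_ _ + _ _] _; apply. Qed.
Let intf1 : (\int[mu]_(t in setT) (f t)%:E = 1)%E. Proof. by case: Hf => -[]. Qed.
Let mean_fin : (\int[mu]_(t in setT) (t * f t)%:E < +oo)%E.
Proof. by case: Hf => _ []. Qed.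

Let mfE (D : set R) : measurable_fun D (fun x => (f x)%:E).
Proof. exact/measurable_EFinP/measurable_funTS. Qed.

Let tf_ge0 t : 0 <= t * f t.
Proof. by have [t0|t0] := leP 0 t; [exact: mulr_ge0 | rewrite f_neg // mulr0]. Qed.

Let mtf (D : set R) : measurable_fun D (fun t => (t * f t)%:E).
Proof. by apply/measurable_EFinP/measurable_funTS; exact: measurable_funM. Qed.

Definition mass (D : set R) : R := fine (\int[mu]_(x in D) (f x)%:E)%E.

Lemma massE (D : set R) : measurable D ->
  (mass D)%:E = (\int[mu]_(x in D) (f x)%:E)%E.
Proof.
move=> mD; rewrite fineK// ge0_fin_numE; last first.
  by apply: integral_ge0 => x _; rewrite lee_fin.
apply: (@le_lt_trans _ _ 1%E); last exact: ltry.
rewrite -intf1; apply: ge0_subset_integral => //; first exact: mfE.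
by move=> x _; rewrite lee_fin.
Qed.

Lemma mass_ge0 (D : set R) : 0 <= mass D.
Proof. by rewrite fine_ge0 // integral_ge0 // => x _; rewrite lee_fin. Qed.

Lemma massT : mass setT = 1.
Proof. by rewrite /mass intf1. Qed.

Lemma massU (D E : set R) : measurable D -> measurable E -> [disjoint D & E] ->
  mass (D `|` E) = mass D + mass E.
Proof.
move=> mD mE DE; apply: EFin_inj; rewrite EFinD !massE//; last exact: measurableU.
rewrite ge0_integral_setU//; first exact: mfE.
by move=> x _; rewrite lee_fin.
Qed.

Lemma mass0 (D : set R) : (forall x, D x -> x < 0) -> mass D = 0.
Proof.
move=> Dn; rewrite /mass (eq_integral (cst 0%E)) ?integral0//.
by move=> x; rewrite inE => /Dn /f_neg ->.
Qed.

Lemma mass_itv_small e : 0 < e -> exists2 d : R, 0 < d &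
  forall (b1 b2 : bool) (x y : R), y - x < d ->
  mass [set` Interval (BSide b1 x) (BSide b2 y)] < e.
Proof.
move=> e0.
have intf : mu.-integrable setT (EFin \o f).
  apply/integrableP; split; first exact/measurable_EFinP.
  under eq_integral do rewrite /= ger0_norm//.
  by rewrite intf1 ltry.
have [d [d0 small]] := integral_normr_continuous intf e0.
exists d => // b1 b2 x y yx.
have := small _ (measurable_itv (Interval (BSide b1 x) (BSide b2 y))).
rewrite /Rintegral; under eq_integral do rewrite ger0_norm//; apply.
rewrite /= lebesgue_measure_itv /=; case: ifP => _; last by rewrite lte_fin.
by rewrite -EFinD lte_fin.
Qed.

Lemma cdf_neg x : x < 0 -> Defs.cdf f x = 0.
Proof.
by move=> x0; apply: mass0 => y /=; rewrite in_itv /= => /le_lt_trans; apply.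
Qed.

Lemma cdfD_mass_gt x : Defs.cdf f x + mass `]x, +oo[ = 1.
Proof.
rewrite -massT -(itv_setU_setT false x) massU//.
exact: disjoint_rays.
Qed.

Definition mean : R := fine (\int[mu]_(t in setT) (t * f t)%:E)%E.

Lemma meanE : mean%:E = (\int[mu]_(t in setT) (t * f t)%:E)%E.
Proof.
rewrite fineK// ge0_fin_numE//.
by apply: integral_ge0 => t _; rewrite lee_fin.
Qed.

Lemma mean_ge0 : 0 <= mean.
Proof. by rewrite -lee_fin meanE integral_ge0 // => t _; rewrite lee_fin. Qed.

Lemma markov x : 0 < x -> x * mass `]x, +oo[ <= mean.
Proof.
move=> x0; rewrite -lee_fin EFinM massE// meanE.
rewrite -ge0_integralZl_EFin//; last 3 first.
- by move=> ? _; rewrite lee_fin.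
- exact: mfE.
- exact: ltW.
apply: (@le_trans _ _ (\int[mu]_(t in `]x, +oo[) (t * f t)%:E)%E).
  apply: (ge0_le_integral mu (measurable_itv _) _ _ (mtf _)).
  - by move=> t _; rewrite lee_fin mulr_ge0 // ltW.
  - exact/measurable_EFinP/measurable_funM/measurable_funTS.
  - move=> t; rewrite /= in_itv /= andbT => xt.
    by rewrite lee_fin ler_wpM2r // ltW.
apply: (ge0_subset_integral mu (measurable_itv _) measurableT (mtf _)) => //.
by move=> t _; rewrite lee_fin.
Qed.

Section Threshold.
Variable A : R.
Hypothesis A1 : 1 < A.

Let A0 : 0 < A. Proof. exact: lt_trans ltr01 A1. Qed.
Let Ainv_lt1 : A^-1 < 1. Proof. by rewrite invf_lt1. Qed.

Definition threshold : R := cdf_inv f (1 - A^-1).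

Let quantile_set := [set x | 1 - A^-1 <= Defs.cdf f x].

Let quantile_set_ge0 x : quantile_set x -> 0 <= x.
Proof.
rewrite leNgt; apply: contraPN => x0.
by rewrite /quantile_set /= (cdf_neg _ x0) subr_le0 leNgt Ainv_lt1.
Qed.

(* By Markov's inequality the tail beyond [mean * A + 1] has mass below [1/A]. *)
Let quantile_set_nonempty : quantile_set (mean * A + 1).
Proof.
set x := mean * A + 1.
have m0 := mean_ge0.
have x0 : 0 < x by rewrite /x; have := A0; nra.
have tail_lt : mass `]x, +oo[ < A^-1.
  have := markov _ x0; have := mass_ge0 `]x, +oo[; set g := mass _ => g0 xg.
  have gA : g * A < 1.
    rewrite ltNge; apply/negP => gA.
    have : x * 1 <= x * (g * A) by rewrite ler_wpM2l // ltW.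
    have := ler_wpM2r (ltW A0) xg; rewrite /x; lra.
  by rewrite -[g](mulfK (lt0r_neq0 A0)) -[X in _ < X]mul1r ltr_pM2r ?invr_gt0.
by rewrite /quantile_set /=; have := cdfD_mass_gt x; lra.
Qed.

Let has_inf_quantile_set : has_inf quantile_set.
Proof. by split; [exists (mean * A + 1) | exists 0 => y /quantile_set_ge0]. Qed.

Lemma threshold_ge0 : 0 <= threshold.
Proof. by apply: lb_le_inf; [exists (mean * A + 1) | move=> y /quantile_set_ge0]. Qed.

Let threshold_le x : quantile_set x -> threshold <= x.
Proof. by move=> qx; apply: ge_inf => //; case: has_inf_quantile_set. Qed.

(* The CDF is continuous, so the generalized inverse is an exact quantile. *)
Lemma mass_lt_threshold : mass `]-oo, threshold[ = 1 - A^-1.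
Proof.
apply/eqP; rewrite eq_le; apply/andP; split; apply/ler_addgt0Pr => e e0;
  have [d d0 small] := mass_itv_small _ e0.
- set x := threshold - d / 2.
  have xc : x < threshold by rewrite /x; lra.
  have cdf_x : Defs.cdf f x < 1 - A^-1.
    by rewrite ltNge; apply: contraPN xc => /threshold_le; rewrite leNgt => /negP.
  rewrite (@itv_bndbnd_setU _ _ -oo%O (BRight x) (BLeft threshold)) ?bnd_simp//.
  rewrite massU//; last first.
    apply: lt_disjoint => u v; rewrite !in_itv /= => ux /andP[xv _].
    exact: le_lt_trans ux xv.
  have : mass `]x, threshold[ < e by apply: small; rewrite /x; lra.
  rewrite /Defs.cdf -/(mass _) in cdf_x; lra.
- have [s qs sc] := inf_adherent d0 has_inf_quantile_set.
  have cs := threshold_le _ qs.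
  have : mass `]-oo, s] = mass `]-oo, threshold[ + mass `[threshold, s].
    rewrite (@itv_bndbnd_setU _ _ -oo%O (BLeft threshold) (BRight s)) ?bnd_simp//.
    rewrite massU//; apply: lt_disjoint => u v; rewrite !in_itv /= => ux /andP[xv _].
    exact: lt_le_trans ux xv.
  have : mass `[threshold, s] < e by apply: small; rewrite /threshold; lra.
  move: qs; rewrite /quantile_set /= /Defs.cdf -/(mass _); lra.
Qed.

Lemma mass_ge_threshold : mass `[threshold, +oo[ = A^-1.
Proof.
have := massT; rewrite -(itv_setU_setT true threshold) massU//; last exact: disjoint_rays.
by rewrite mass_lt_threshold; lra.
Qed.

Lemma threshold_gt0 : 0 < threshold.
Proof.
rewrite lt_neqAle threshold_ge0 andbT; apply/eqP => c0.
have := mass_lt_threshold; rewrite -c0 mass0; last by move=> x /=; rewrite in_itv.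
by have := Ainv_lt1; lra.
Qed.

Lemma integral_above_threshold (g : R -> R) :
  (\int[mu]_(t in setT) (if threshold <= t then g t else 0)%:E =
   \int[mu]_(t in `[threshold, +oo[) (g t)%:E)%E.
Proof.
rewrite [RHS]integral_mkcond; apply: eq_integral => t _.
by rewrite patchE mem_setE /= in_itv /= andbT; case: ifP.
Qed.

Lemma measurable_above_threshold (g : R -> R) : measurable_fun setT g ->
  measurable_fun setT (fun t => if threshold <= t then g t else 0).
Proof. by move=> mg; apply: measurable_fun_ifT => //; exact: measurable_fun_ler. Qed.

Section OnOff.
Variable snr : R.
Hypothesis snr_gt0 : 0 < snr.

Lemma onoff_ge0 t : 0 <= onoff f A snr t.
Proof. by rewrite /onoff; case: ifP => // _; rewrite mulr_ge0 // ltW. Qed.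

Lemma measurable_onoff : measurable_fun setT (onoff f A snr).
Proof. exact: measurable_above_threshold (measurable_cst _). Qed.

Lemma expect_onoff : expect f (onoff f A snr) = snr%:E.
Proof.
transitivity (\int[mu]_(t in setT)
    (if threshold <= t then A * snr * f t else 0)%:E)%E.
  by apply: eq_integral => t _; rewrite /onoff; case: ifP; rewrite ?mul0r.
rewrite integral_above_threshold.
under eq_integral do rewrite EFinM.
rewrite ge0_integralZl_EFin//; last 3 first.
- by move=> t _; rewrite lee_fin.
- exact: mfE.
- by rewrite mulr_ge0 // ltW.
by rewrite -massE // mass_ge_threshold -EFinM mulrAC divff ?mul1r // lt0r_neq0.
Qed.

Lemma admissible_onoff : admissible f A snr (onoff f A snr).
Proof.
split; [exact: measurable_onoff | exact: onoff_ge0 | by rewrite expect_onoff |].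
by move=> t; rewrite /onoff; case: ifP => // _; rewrite mulr_ge0 // ltW.
Qed.

End OnOff.

Definition tail_gain (t : R) : R := if threshold <= t then A * t * f t else 0.

Definition tail_moment : R := fine (\int[mu]_(t in setT) (tail_gain t)%:E)%E.

Lemma tail_gain_ge0 t : 0 <= tail_gain t.
Proof. by rewrite /tail_gain; case: ifP => // _; rewrite -mulrA mulr_ge0 // ltW. Qed.

Lemma measurable_tail_gain : measurable_fun setT tail_gain.
Proof. exact: measurable_above_threshold (measurable_funM (measurable_funM _ _) mf). Qed.

Lemma tail_momentE : tail_moment%:E = (\int[mu]_(t in setT) (tail_gain t)%:E)%E.
Proof.
rewrite fineK // ge0_fin_numE; last first.
  by apply: integral_ge0 => t _; rewrite lee_fin tail_gain_ge0.
apply: (@le_lt_trans _ _ (A%:E * \int[mu]_(t in setT) (t * f t)%:E)%E); last first.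
  by rewrite -meanE -EFinM ltry.
rewrite -ge0_integralZl_EFin //; last 3 first.
- by move=> t _; rewrite lee_fin.
- exact: mtf.
- exact: ltW.
under [X in (_ <= X)%E]eq_integral do rewrite -EFinM.
apply: ge0_le_integral => //.
- by move=> t _; rewrite lee_fin tail_gain_ge0.
- by apply/measurable_EFinP; exact: measurable_tail_gain.
- by apply/measurable_EFinP; apply: measurable_funM => //; exact: measurable_funM.
- move=> t _; rewrite lee_fin /tail_gain; case: ifP => _; first by rewrite mulrA.
  by rewrite mulr_ge0 // ltW.
Qed.

Lemma tail_moment_gt0 : 0 < tail_moment.
Proof.
rewrite -lte_fin tail_momentE /tail_gain integral_above_threshold.
apply: (@lt_le_trans _ _ (\int[mu]_(t in `[threshold, +oo[) ((A * threshold) * f t)%:E)%E).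
  under eq_integral do rewrite EFinM.
  rewrite ge0_integralZl_EFin //; last 3 first.
  - by move=> t _; rewrite lee_fin.
  - exact: mfE.
  - by rewrite mulr_ge0 // ltW // threshold_gt0.
  rewrite -massE // mass_ge_threshold -EFinM lte_fin mulrAC divff ?mul1r ?lt0r_neq0 //.
  exact: threshold_gt0.
apply: ge0_le_integral => //.
- by move=> t _; rewrite lee_fin mulr_ge0 // mulr_ge0 // ltW // threshold_gt0.
- apply/measurable_EFinP/measurable_funM; first exact: measurable_cst.
  exact: measurable_funTS.
- apply/measurable_EFinP/measurable_funTS.
  by apply: measurable_funM => //; exact: measurable_funM.
- move=> t; rewrite /= in_itv /= andbT => ct.
  by rewrite lee_fin ler_wpM2r // ler_wpM2l // ltW.
Qed.

Lemma rate_integrand_bounds (p t : R) : 0 <= p ->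
  0 <= ln (1 + p * t) * f t <= p * t * f t.
Proof.
move=> p0; have [t0|t0] := ltP t 0; first by rewrite f_neg // !mulr0 lexx.
have pt0 : 0 <= p * t by rewrite mulr_ge0.
rewrite mulr_ge0 ?ln_ge0 ?lerDl //= ler_wpM2r // le_ln1Dx //.
by apply: lt_le_trans pt0; rewrite ltrN10.
Qed.

Section Allocation.
Variable P : R -> R.
Hypotheses (mP : measurable_fun setT P) (P_ge0 : forall t, 0 <= P t).

Let mPtf : measurable_fun setT (fun t => P t * t * f t).
Proof. by apply: measurable_funM => //; exact: measurable_funM. Qed.

Let Ptf_ge0 t : 0 <= P t * t * f t.
Proof. by rewrite -mulrA mulr_ge0. Qed.

Lemma rate_ge0 : (0 <= rate f P)%E.
Proof.
apply: integral_ge0 => t _; rewrite lee_fin.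
by case/andP: (rate_integrand_bounds (P t) t (P_ge0 t)).
Qed.

Lemma rate_le_linear :
  (rate f P <= \int[mu]_(t in setT) (P t * t * f t)%:E)%E.
Proof.
apply: ge0_le_integral => //.
- by move=> t _; rewrite lee_fin; case/andP: (rate_integrand_bounds (P t) t (P_ge0 t)).
- apply/measurable_EFinP/measurable_funM => //.
  apply: (measurableT_comp (@measurable_ln R)).
  by apply: measurable_funD => //; exact: measurable_funM.
- exact/measurable_EFinP.
- by move=> t _; rewrite lee_fin; case/andP: (rate_integrand_bounds (P t) t (P_ge0 t)).
Qed.

(* Exchange argument: moving power from below the threshold to above it can
   only increase [P t * t]. *)
Let bathtub_pointwise snr t : 0 <= snr -> P t <= A * snr ->
  P t * t * f t + threshold * (onoff f A snr t * f t) <=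
  snr * tail_gain t + threshold * (P t * f t).
Proof.
move=> snr0 PA; rewrite /onoff /tail_gain; have := P_ge0 t; have := f_ge0 t.
case: ifP => ct Pt0 ft0.
  have : 0 <= f t * ((A * snr - P t) * (t - threshold)).
    by rewrite mulr_ge0 // mulr_ge0 // subr_ge0.
  nra.
have : 0 <= f t * (P t * (threshold - t)).
  by rewrite mulr_ge0 // mulr_ge0 // subr_ge0 ltW // ltNge ct.
nra.
Qed.

Lemma integral_gain_le_tail_moment snr : 0 < snr -> admissible f A snr P ->
  (\int[mu]_(t in setT) (P t * t * f t)%:E <= (snr * tail_moment)%:E)%E.
Proof.
move=> snr0 [_ _ EP PA].
have c0 := threshold_ge0.
have mQf : measurable_fun setT (fun t => onoff f A snr t * f t).
  exact: measurable_funM (measurable_onoff snr) mf.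
have Qf_ge0 t : 0 <= onoff f A snr t * f t by rewrite mulr_ge0 ?onoff_ge0 // ltW.
have mPf : measurable_fun setT (fun t => P t * f t) by exact: measurable_funM.
have Pf_ge0 t : 0 <= P t * f t by rewrite mulr_ge0.
have mgain : measurable_fun setT (fun t => snr * tail_gain t).
  exact: measurable_funM (measurable_cst _) measurable_tail_gain.
have gain_ge0 t : 0 <= snr * tail_gain t by rewrite mulr_ge0 ?tail_gain_ge0 // ltW.
have int_gain : (\int[mu]_(t in setT) (snr * tail_gain t)%:E =
    (snr * tail_moment)%:E)%E.
  under eq_integral do rewrite EFinM.
  rewrite ge0_integralZl_EFin //; last 3 first.
  - by move=> t _; rewrite lee_fin tail_gain_ge0.
  - by apply/measurable_EFinP; exact: measurable_tail_gain.
  - exact: ltW.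
  by rewrite EFinM tail_momentE.
have : (\int[mu]_(t in setT) (P t * t * f t + threshold * (onoff f A snr t * f t))%:E <=
         \int[mu]_(t in setT) (snr * tail_gain t + threshold * (P t * f t))%:E)%E.
  apply: ge0_le_integral => //.
  - by move=> t _; rewrite lee_fin addr_ge0 // mulr_ge0.
  - by apply/measurable_EFinP/measurable_funD => //; exact: measurable_funM.
  - by apply/measurable_EFinP/measurable_funD => //; exact: measurable_funM.
  - by move=> t _; rewrite lee_fin bathtub_pointwise // ltW.
rewrite !ge0_integralDZr // int_gain -/(expect f P) -/(expect f (onoff f A snr)).
rewrite (expect_onoff _ snr0) => /le_trans/(_ (leeD2l _ (lee_wpmul2l _ EP))).
by rewrite lee_fin leeD2rE //; apply; exact: c0.
Qed.

End Allocation.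

Lemma capacity_le snr : 0 < snr -> (capacity f A snr <= (snr * tail_moment)%:E)%E.
Proof.
move=> snr0; apply/ereal_supP => _ [P aP <-]; have [mP P0 _ _] := aP.
exact: le_trans (rate_le_linear P mP P0) (integral_gain_le_tail_moment P mP P0 _ snr0 aP).
Qed.

Lemma rate_onoff_le_capacity snr : 0 < snr ->
  (rate f (onoff f A snr) <= capacity f A snr)%E.
Proof.
by move=> snr0; apply: ereal_sup_ubound; exists (onoff f A snr) => //; exact: admissible_onoff.
Qed.

Definition truncated_gain (N : nat) (t : R) : R :=
  if t <= N%:R then tail_gain t else 0.

Lemma truncated_gain_ge0 N t : 0 <= truncated_gain N t.
Proof. by rewrite /truncated_gain; case: ifP => // _; exact: tail_gain_ge0. Qed.

Lemma truncated_gain_le N t : truncated_gain N t <= tail_gain t.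
Proof. by rewrite /truncated_gain; case: ifP => // _; exact: tail_gain_ge0. Qed.

Lemma measurable_truncated_gain N : measurable_fun setT (truncated_gain N).
Proof.
apply: measurable_fun_ifT; [exact: measurable_fun_ler | exact: measurable_tail_gain |].
exact: measurable_cst.
Qed.

Lemma integral_truncated_gain_near e : 0 < e -> \forall N \near \oo,
  ((tail_moment - e)%:E <= \int[mu]_(t in setT) (truncated_gain N t)%:E)%E.
Proof.
move=> e0.
have mg N : measurable_fun setT (fun t => (truncated_gain N t)%:E).
  by apply/measurable_EFinP; exact: measurable_truncated_gain.
have g0 N t : setT t -> (0 <= (truncated_gain N t)%:E)%E.
  by move=> _; rewrite lee_fin truncated_gain_ge0.
have nd t : setT t ->
    {homo (fun N => (truncated_gain N t)%:E) : n m / (n <= m)%N >-> (n <= m)%E}.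
  move=> _ n m nm; rewrite lee_fin /truncated_gain; case: ifP => tn.
    by rewrite ifT // (le_trans tn) // ler_nat.
  by case: ifP => _; rewrite ?tail_gain_ge0.
have ndI : nondecreasing_seq (fun N => \int[mu]_(t in setT) (truncated_gain N t)%:E)%E.
  move=> n m nm; apply: (ge0_le_integral mu measurableT (g0 n) (mg n) (mg m)).
  by move=> t _; exact: nd.
apply: lte_lim => //; first exact: ereal_nondecreasing_is_cvgn.
rewrite -monotone_convergence //.
have -> : (fun t => limn (fun N => (truncated_gain N t)%:E)) = (fun t => (tail_gain t)%:E).
  apply/funext => t; apply: (lim_near_cst (@ereal_hausdorff R)).
  near=> N; rewrite /truncated_gain ifT //; near: N; exact: nbhs_infty_ger.
by rewrite -tail_momentE lte_fin; lra.
Unshelve. all: by end_near.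
Qed.

Lemma rate_onoff_integrand_ge snr N t : 0 < snr ->
  snr * (1 - A * snr * N%:R) * truncated_gain N t <= ln (1 + onoff f A snr t * t) * f t.
Proof.
move=> snr0; rewrite /truncated_gain /tail_gain.
have := rate_integrand_bounds (onoff f A snr t) t (onoff_ge0 _ snr0 t); rewrite /onoff.
case: ifP => ct; last by rewrite if_same mulr0 mul0r addr0 ln1 mul0r.
case: ifP => [tN _|_ /andP[+ _]]; last by rewrite mulr0.
set x := A * snr * t.
have x0 : 0 <= x by rewrite mulr_ge0 ?(le_trans threshold_ge0 ct) // mulr_ge0 // ltW.
have xN : x <= A * snr * N%:R by rewrite ler_wpM2l // mulr_ge0 // ltW.
rewrite mulrA ler_wpM2r // (le_trans _ (ln1Dx_ge _ _ x0)) //.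
have -> : snr * (1 - A * snr * N%:R) * (A * t) = x * (1 - A * snr * N%:R) by rewrite /x; ring.
by rewrite expr2; nra.
Qed.

Lemma rate_onoff_ge_truncated snr N : 0 < snr -> A * snr * N%:R <= 1 ->
  ((snr * (1 - A * snr * N%:R))%:E * \int[mu]_(t in setT) (truncated_gain N t)%:E <=
   rate f (onoff f A snr))%E.
Proof.
move=> snr0 aN1.
rewrite -ge0_integralZl_EFin //; last 3 first.
- by move=> t _; rewrite lee_fin truncated_gain_ge0.
- by apply/measurable_EFinP; exact: measurable_truncated_gain.
- by rewrite mulr_ge0 ?subr_ge0 // ltW.
apply: ge0_le_integral => //.
- by move=> t _; rewrite lee_fin mulr_ge0 ?truncated_gain_ge0 // mulr_ge0 ?subr_ge0 // ltW.
- apply/measurable_EFinP/measurable_funM; first exact: measurable_cst.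
  exact: measurable_truncated_gain.
- apply/measurable_EFinP/measurable_funM => //.
  apply: (measurableT_comp (@measurable_ln R)).
  by apply: measurable_funD => //; apply: measurable_funM => //; exact: measurable_onoff.
- by move=> t _; rewrite lee_fin rate_onoff_integrand_ge.
Qed.

Lemma rate_onoff_fin_num snr : 0 < snr -> rate f (onoff f A snr) \is a fin_num.
Proof.
move=> snr0; rewrite ge0_fin_numE; last exact: rate_ge0 _ (onoff_ge0 _ snr0).
exact: le_lt_trans (rate_onoff_le_capacity _ snr0) (le_lt_trans (capacity_le _ snr0) (ltry _)).
Qed.

Lemma capacity_fin_num snr : 0 < snr -> capacity f A snr \is a fin_num.
Proof.
move=> snr0; rewrite ge0_fin_numE; last first.
  exact: le_trans (rate_ge0 _ (onoff_ge0 _ snr0)) (rate_onoff_le_capacity _ snr0).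
exact: le_lt_trans (capacity_le _ snr0) (ltry _).
Qed.

(* Truncating at [N] keeps [x = A snr t] below [A snr N], where
   [ln (1 + x) >= x (1 - A snr N)]. *)
Lemma fine_rate_onoff_ge e : 0 < e -> \forall snr \near 0^'+,
  snr * (tail_moment - e) <= fine (rate f (onoff f A snr)).
Proof.
move=> e0; have e20 : 0 < e / 2 by rewrite divr_gt0.
have [N _ /(_ N (leqnn _))] := integral_truncated_gain_near _ e20.
have IN_le : (\int[mu]_(t in setT) (truncated_gain N t)%:E <= tail_moment%:E)%E.
  rewrite tail_momentE; apply: ge0_le_integral => //.
  - by move=> t _; rewrite lee_fin truncated_gain_ge0.
  - by apply/measurable_EFinP; exact: measurable_truncated_gain.
  - by apply/measurable_EFinP; exact: measurable_tail_gain.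
  - by move=> t _; rewrite lee_fin truncated_gain_le.
have IN_fin : (\int[mu]_(t in setT) (truncated_gain N t)%:E)%E \is a fin_num.
  rewrite ge0_fin_numE ?(le_lt_trans IN_le) ?ltry //.
  by apply: integral_ge0 => t _; rewrite lee_fin truncated_gain_ge0.
move: IN_le (rate_onoff_ge_truncated ^~ N); rewrite -(fineK IN_fin) !lee_fin.
set IN := fine _ => IN_le rate_ge IN_ge.
have M0 := tail_moment_gt0.
set K := A * N%:R + 1.
have K0 : 0 < K by rewrite /K ltr_pwDr // mulr_ge0 // ltW.
near=> snr.
have snr0 : 0 < snr by near: snr; exact: nbhs_right_gt.
have snrK1 : snr * K < 1.
  by rewrite -ltr_pdivlMr //; near: snr; apply: nbhs_right_lt; rewrite divr_gt0.
have snrKM : snr * K * tail_moment < e / 2.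
  rewrite -ltr_pdivlMr // -ltr_pdivlMr //; near: snr; apply: nbhs_right_lt.
  by rewrite !divr_gt0.
have aK : A * snr * N%:R <= snr * K by rewrite /K mulrDr mulr1 -mulrA mulrCA lerDl ltW.
have a0 : 0 <= A * snr * N%:R by rewrite mulr_ge0 // mulr_ge0 // ltW.
rewrite -lee_fin fineK ?rate_onoff_fin_num //.
apply: le_trans (rate_ge _ snr0 _); last by lra.
rewrite -EFinM lee_fin -[X in _ <= X]mulrA ler_wpM2l ?ltW //.
have : A * snr * N%:R * tail_moment <= snr * K * tail_moment by rewrite ler_wpM2r // ltW.
nra.
Unshelve. all: by end_near.
Qed.

Lemma rate_capacity_fine_bounds snr : 0 < snr ->
  fine (rate f (onoff f A snr)) <= fine (capacity f A snr) <= snr * tail_moment.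
Proof.
move=> snr0; rewrite fine_le ?rate_onoff_fin_num ?capacity_fin_num //=.
  by rewrite -lee_fin fineK ?capacity_fin_num // capacity_le.
exact: rate_onoff_le_capacity.
Qed.

End Threshold.
End Density.

Theorem corollary1 (R : realType) (f : R -> R) (A : R) :
  gain_density f -> 1 < A ->
  (forall snr : R, 0 < snr -> admissible f A snr (onoff f A snr)) /\
  ((fine (rate f (onoff f A snr)) / fine (capacity f A snr))
     @[snr --> 0^'+] --> (1 : R)).
Proof.
move=> Hf A1; split; first exact: admissible_onoff.
apply: ratio_cvg1 (tail_moment_gt0 _ _ Hf _ A1) _ (fine_rate_onoff_ge _ _ Hf _ A1).
near=> snr; apply: rate_capacity_fine_bounds => //; near: snr; exact: nbhs_right_gt.
Unshelve. all: by end_near.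
Qed.
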